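(* Assume the standing setting below and run the DMFW algorithm with $\eta_k=\frac{2}{k+2}$ (and any $\gamma_k\in(0,1]$). Then for every $i\in\mathcal N$ and $k\ge1$, $$\|\hat x_{k+1}^i-\hat x_k^i\|\le\frac{2(D+2C_1)}{k+2},\qquad C_1=k_0\sqrt nD.$$
   Context: Setting. There are $n$ agents $\mathcal N=\{1,\dots,n\}$ connected by a connected graph $\mathcal G=(\mathcal N,\mathcal E)$ with weight matrix $C=[c_{ij}]\in\mathbb R^{n\times n}$, where $c_{ij}\ge 0$ and $c_{ij}=0$ whenever $j\ne i$ and $(i,j)\notin\mathcal E$. $C$ is doubly stochastic, i.e. all row sums and all column sums equal $1$. Let $\lambda$ be the second largest eigenvalue of $C$ in magnitude. It is assumed that $|\lambda|<1$ and that for all vectors $x^1,\dots,x^n\in\mathbb R^p$, with $\bar x=\frac1n\sum_i x^i$ and $\hat x^i=\sum_j c_{ij}x^j$, one has $\big(\sum_i\|\hat x^i-\bar x\|^2\big)^{1/2}\le|\lambda|\big(\sum_i\|x^i-\bar x\|^2\big)^{1/2}$. Let $k_0$ be the smallest positive integer with $|\lambda|\le (k_0/(k_0+1))^2$. Problem data. $\mathcal X\subset\mathbb R^p$ is convex and compact with diameter $D$, i.e. $\|x-x'\|\le D$ for all $x,x'\in\mathcal X$. For each $i$, $\xi^i$ is a random variable. The function $f_i(\cdot,\xi)$ is differentiable with $L$-Lipschitz gradient for every $\xi$. $F_i(x)=\mathbb E[f_i(x,\xi^i)]$ is differentiable with $\nabla F_i(x)=\mathbb E[\nabla f_i(x,\xi^i)]$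 and $L$-Lipschitz gradient. For all $x\in\mathcal X$ and $i$, $\mathbb E\|\nabla F_i(x)-\nabla f_i(x,\xi^i)\|^2\le\delta^2$. Set $F=\frac1n\sum_{i=1}^nF_i$. DMFW algorithm. Fix step sizes $\gamma_k,\eta_k\in(0,1]$ and deterministic initial points $x_1^i\in\mathcal X$. The samples $\xi_k^i$ ($k\ge1$, $i\in\mathcal N$) are mutually independent, and $\xi_k^i$ has the distribution of $\xi^i$. For $k=1,2,\dots$ and each $i$: - $\hat x_k^i=\sum_{j=1}^n c_{ij}x_k^j$. - For $k=1$: $y_1^i=s_1^i=\nabla f_i(\hat x_1^i,\xi_1^i)$. For $k\ge2$: $y_k^i=(1-\gamma_k)y_{k-1}^i+\nabla f_i(\hat x_k^i,\xi_k^i)-(1-\gamma_k)\nabla f_i(\hat x_{k-1}^i,\xi_k^i)$ and $s_k^i=\sum_j c_{ij}s_{k-1}^j+y_k^i-y_{k-1}^i$. - $p_k^i=\sum_j c_{ij}s_k^j$. - $\theta_k^i\in\arg\min_{\phi\in\mathcal X}\langle p_k^i,\phi\rangle$. - $x_{k+1}^i=\hat x_k^i+\eta_k(\theta_k^i-\hat x_k^i)$. Notation: $\bar x_k=\frac1n\sum_i x_k^i$. *)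

From HB Require Import structures.
From mathcomp Require Import all_boot all_order all_algebra.
From mathcomp Require Import all_classical all_reals all_analysis.
From mathcomp Require Import complex.
Import Order.TTheory GRing.Theory Num.Theory.
Import numFieldNormedType.Exports.

Set Implicit Arguments.
Unset Strict Implicit.
Unset Printing Implicit Defensive.

Local Open Scope ring_scope.

Section DMFWDefs.
Variable R : realType.

Definition enorm (p : nat) (v : 'rV[R]_p) : R :=
  Num.sqrt (\sum_(j < p) v 0 j ^+ 2).

Definition dotv (p : nat) (u v : 'rV[R]_p) : R :=
  \sum_(j < p) u 0 j * v 0 j.

Definition doubly_stochastic (n : nat) (C : 'M[R]_n) : Prop :=
  (forall i j, 0 <= C i j) /\
  (forall i, \sum_(j < n) C i j = 1) /\
  (forall j, \sum_(i < n) C i j = 1).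

Definition connected_graph (n : nat) (E : rel 'I_n) : Prop :=
  (forall i j, E i j = E j i) /\ (forall i j, connect E i j).

Definition supported_on (n : nat) (C : 'M[R]_n) (E : rel 'I_n) : Prop :=
  forall i j, j != i -> ~~ E i j -> C i j = 0.

(* m is the modulus |lambda| of the second largest (in modulus) eigenvalue
   of C, eigenvalues counted with algebraic multiplicity (roots of the
   characteristic polynomial of C viewed as a complex matrix). *)
Definition second_eig_modulus (n : nat) (C : 'M[R]_n) (m : R) : Prop :=
  exists rs : seq R[i],
    char_poly (map_mx (fun r : R => (r%:C)%C) C) = \prod_(z <- rs) ('X - z%:P)
    /\ m = nth 0 (sort (fun a b : R => b <= a) (map (@Normc.normc R) rs)) 1.

Definition mixv (n p : nat) (C : 'M[R]_n) (z : 'I_n -> 'rV[R]_p) (i : 'I_n)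
  : 'rV[R]_p := \sum_(j < n) C i j *: z j.

Definition avgv (n p : nat) (z : 'I_n -> 'rV[R]_p) : 'rV[R]_p :=
  n%:R^-1 *: \sum_(i < n) z i.

Definition consensus_err (n p : nat) (z : 'I_n -> 'rV[R]_p) (zbar : 'rV[R]_p)
  : R := Num.sqrt (\sum_(i < n) enorm (z i - zbar) ^+ 2).

End DMFWDefs.

From HB Require Import structures.
From mathcomp Require Import all_boot all_order all_algebra.
From mathcomp Require Import all_classical all_reals all_analysis.
From mathcomp Require Import complex.
From mathcomp Require Import ring lra.
Import Order.TTheory GRing.Theory Num.Theory.
Import numFieldNormedType.Exports.
Local Open Scope ring_scope.

(* The averaged iterate xbar_k moves by eta_k (thetabar_k - xbar_k), hence by
   at most eta_k D, while every xhat_k^i lies within lam e_k of xbar_k, where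
   e_k is the consensus error of x_k.  Mixing contracts the consensus error by
   lam and the Frank-Wolfe update is a convex combination with the points
   theta_k^i, so e_(k+1) <= (1 - eta_k) lam e_k + eta_k sqrt(n) D.  Because
   lam <= (k0/(k0+1))^2, induction on k gives lam e_k <= 2 k0 sqrt(n) D/(k+2),
   and the triangle inequality through xbar_(k+1) and xbar_k concludes. *)

Section EuclideanNorm.
Context {R : realType}.

Lemma cauchy_schwarz_sum (I : finType) (a b : I -> R) :
  (\sum_i a i * b i) ^+ 2 <= (\sum_i a i ^+ 2) * (\sum_i b i ^+ 2).
Proof.
set A := \sum_i a i ^+ 2; set B := \sum_i b i ^+ 2; set P := \sum_i a i * b i.
have sum_sqr_ge0 : 0 <= \sum_i \sum_j (a i * b j - a j * b i) ^+ 2.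
  by apply: sumr_ge0 => i _; apply: sumr_ge0 => j _; exact: sqr_ge0.
(* Lagrange's identity *)
have lagrange : \sum_i \sum_j (a i * b j - a j * b i) ^+ 2 = 2 * (A * B - P ^+ 2).
  transitivity (\sum_i (a i ^+ 2 * B + b i ^+ 2 * A - 2 * (a i * b i) * P)).
    apply: eq_bigr => i _.
    rewrite /A /B /P !mulr_sumr -!big_split -sumrB; apply: eq_bigr => j _.
    rewrite /=; ring.
  rewrite sumrB big_split /= -!mulr_suml -/A -/B -/P -mulr_sumr -/P; ring.
lra.
Qed.

Lemma minkowski_sum (I : finType) (a b : I -> R) :
  Num.sqrt (\sum_i (a i + b i) ^+ 2)
    <= Num.sqrt (\sum_i a i ^+ 2) + Num.sqrt (\sum_i b i ^+ 2).
Proof.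
set A := \sum_i a i ^+ 2; set B := \sum_i b i ^+ 2; set P := \sum_i a i * b i.
have A0 : 0 <= A by apply: sumr_ge0 => i _; exact: sqr_ge0.
have B0 : 0 <= B by apply: sumr_ge0 => i _; exact: sqr_ge0.
have -> : \sum_i (a i + b i) ^+ 2 = A + 2 * P + B.
  by rewrite /A /B /P mulr_sumr -!big_split; apply: eq_bigr => i _ /=; ring.
have P_le : P <= Num.sqrt A * Num.sqrt B.
  apply: le_trans (ler_norm P) _.
  rewrite -sqrtrM // -sqrtr_sqr ler_sqrt ?mulr_ge0 //.
  exact: cauchy_schwarz_sum.
have sA := sqrtr_ge0 A; have sB := sqrtr_ge0 B.
rewrite -[X in _ <= X]ger0_norm ?addr_ge0 // -sqrtr_sqr ler_sqrt ?sqr_ge0 //.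
rewrite sqrrD !sqr_sqrtr //; lra.
Qed.

Context {p : nat}.
Implicit Types u v : 'rV[R]_p.

Lemma enorm_ge0 v : 0 <= enorm v.
Proof. exact: sqrtr_ge0. Qed.

Lemma enorm0 : enorm (0 : 'rV[R]_p) = 0.
Proof. by rewrite /enorm big1 ?sqrtr0 // => j _; rewrite mxE expr0n. Qed.

Lemma enormD u v : enorm (u + v) <= enorm u + enorm v.
Proof. by rewrite /enorm; under eq_bigr do rewrite mxE; exact: minkowski_sum. Qed.

Lemma enormZ c v : enorm (c *: v) = `|c| * enorm v.
Proof.
rewrite /enorm; under eq_bigr do rewrite mxE exprMn.
by rewrite -mulr_sumr sqrtrM ?sqr_ge0 // sqrtr_sqr.
Qed.

Lemma enorm_distC u v : enorm (u - v) = enorm (v - u).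
Proof. by rewrite -opprB -scaleN1r enormZ normrN normr1 mul1r. Qed.

Lemma enorm_sum_le (I : finType) (f : I -> 'rV[R]_p) :
  enorm (\sum_i f i) <= \sum_i enorm (f i).
Proof.
apply: (big_rec2 (fun a b => enorm a <= b)); first by rewrite enorm0.
by move=> i a b _ H; apply: le_trans (enormD _ _) _; exact: lerD.
Qed.

Lemma enorm_sub_conv_le (I : finType) (w : I -> R) (z : I -> 'rV[R]_p) a D :
  (forall j, 0 <= w j) -> \sum_j w j = 1 ->
  (forall j, enorm (a - z j) <= D) -> enorm (a - \sum_j w j *: z j) <= D.
Proof.
move=> w_ge0 w_sum1 zD.
have -> : a - \sum_j w j *: z j = \sum_j w j *: (a - z j).
  by under [RHS]eq_bigr do rewrite scalerBr; rewrite sumrB -scaler_suml w_sum1 scale1r.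
apply: le_trans (enorm_sum_le _ _) _; apply: (@le_trans _ _ (\sum_j w j * D)).
  by apply: ler_sum => j _; rewrite enormZ ger0_norm // ler_wpM2l.
by rewrite -mulr_suml w_sum1 mul1r.
Qed.

Lemma enorm_conv2_sub_le c u v a D : 0 <= c <= 1 ->
  enorm (u - a) <= D -> enorm (v - a) <= D ->
  enorm ((1 - c) *: u + c *: v - a) <= D.
Proof.
move=> /andP [c_ge0 c_le1] uD vD.
have -> : (1 - c) *: u + c *: v - a = (1 - c) *: (u - a) + c *: (v - a).
  by rewrite !scalerBr addrACA -opprD -scalerDl subrK scale1r.
apply: le_trans (enormD _ _) _; rewrite !enormZ !ger0_norm ?subr_ge0 //.
apply: le_trans (_ : (1 - c) * D + c * D <= _); last by rewrite -mulrDl subrK mul1r.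
by rewrite lerD // ler_wpM2l // subr_ge0.
Qed.

End EuclideanNorm.

Section Averaging.
Context {R : realType} {n p : nat}.
Implicit Types (z u v : 'I_n -> 'rV[R]_p) (a b : 'rV[R]_p).

Lemma enorm_sub_avgv_le z a D : (0 < n)%N ->
  (forall j, enorm (a - z j) <= D) -> enorm (a - avgv z) <= D.
Proof.
move=> n_gt0 zD; rewrite /avgv scaler_sumr; apply: enorm_sub_conv_le zD.
  by move=> j; rewrite invr_ge0 ler0n.
by rewrite sumr_const card_ord -[_ *+ n]mulr_natr mulVf // pnatr_eq0 -lt0n.
Qed.

Lemma enorm_sub_mixv_le (C : 'M[R]_n) z i a D : doubly_stochastic C ->
  (forall j, enorm (a - z j) <= D) -> enorm (a - mixv C z i) <= D.
Proof. by move=> [C_ge0 [C_row1 _]]; exact: enorm_sub_conv_le. Qed.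

Lemma avgv_mixv (C : 'M[R]_n) z : doubly_stochastic C -> avgv (mixv C z) = avgv z.
Proof.
move=> [_ [_ C_col]]; rewrite /avgv /mixv exchange_big /=; congr (_ *: _).
by apply: eq_bigr => j _; rewrite -scaler_suml C_col scale1r.
Qed.

Lemma avgv_lincomb z u c d :
  avgv (fun j => c *: z j + d *: u j) = c *: avgv z + d *: avgv u.
Proof.
by rewrite /avgv big_split /= -!scaler_sumr scalerDr !scalerA mulrC [_ * d]mulrC.
Qed.

Lemma enorm_le_consensus_err z a i : enorm (z i - a) <= consensus_err z a.
Proof.
rewrite -[leLHS]ger0_norm ?enorm_ge0 // -sqrtr_sqr ler_sqrt ?sumr_ge0 //.
  by rewrite (bigD1 i) //= lerDl sumr_ge0 // => j _; exact: sqr_ge0.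
by move=> j _; exact: sqr_ge0.
Qed.

Lemma consensus_err_le z a D : 0 <= D ->
  (forall i, enorm (z i - a) <= D) -> consensus_err z a <= Num.sqrt n%:R * D.
Proof.
move=> D_ge0 zD; apply: (@le_trans _ _ (Num.sqrt (\sum_(i < n) D ^+ 2))).
  rewrite ler_sqrt ?sumr_ge0 // => [|i _]; last exact: sqr_ge0.
  by apply: ler_sum => i _; rewrite lerXn2r ?nnegrE ?enorm_ge0.
by rewrite sumr_const card_ord -[_ *+ n]mulr_natl sqrtrM ?ler0n // sqrtr_sqr ger0_norm.
Qed.

Lemma consensus_errD z u a b :
  consensus_err (fun i => z i + u i) (a + b)
    <= consensus_err z a + consensus_err u b.
Proof.
apply: le_trans _ (minkowski_sum _ (fun i => enorm (z i - a)) (fun i => enorm (u i - b))).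
rewrite ler_sqrt ?sumr_ge0 // => [|i _]; last exact: sqr_ge0.
apply: ler_sum => i _; rewrite lerXn2r ?nnegrE ?addr_ge0 ?enorm_ge0 //.
by rewrite opprD addrACA enormD.
Qed.

Lemma consensus_errZ z a c :
  consensus_err (fun i => c *: z i) (c *: a) = `|c| * consensus_err z a.
Proof.
rewrite /consensus_err.
under eq_bigr do rewrite -scalerBr enormZ exprMn real_normK ?num_real //.
by rewrite -mulr_sumr sqrtrM ?sqr_ge0 // sqrtr_sqr.
Qed.

Lemma consensus_err_conv z u a b c : 0 <= c <= 1 ->
  consensus_err (fun i => (1 - c) *: z i + c *: u i) ((1 - c) *: a + c *: b)
    <= (1 - c) * consensus_err z a + c * consensus_err u b.
Proof.
move=> /andP [c_ge0 c_le1].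
apply: le_trans (consensus_errD (fun i => (1 - c) *: z i) (fun i => c *: u i) _ _) _.
by rewrite !consensus_errZ !ger0_norm ?subr_ge0.
Qed.

End Averaging.

Section RateRecursion.
Context {R : realType}.

Lemma rate_ratio_le {a b : R} : 1 <= a -> 0 <= b ->
  (a / (a + 1)) ^+ 2 * (2 * a * b / (b + 2) ^+ 2 + 2 / (b + 2)) <= 2 * a / (b + 3).
Proof.
move=> a_ge1 b_ge0.
have a1_neq0 : a + 1 != 0 by apply/eqP; lra.
have b2_neq0 : b + 2 != 0 by apply/eqP; lra.
have b3_neq0 : b + 3 != 0 by apply/eqP; lra.
rewrite -subr_ge0.
have -> : 2 * a / (b + 3) - (a / (a + 1)) ^+ 2 * (2 * a * b / (b + 2) ^+ 2 + 2 / (b + 2))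
  = 2 * a * (b * (a + 1) ^+ 2 + (a + 1) * (4 * a - 2) + b ^+ 2 * (a + 1)
             + b * (a + 1) + 2 * b + 6)
    / ((b + 3) * (a + 1) ^+ 2 * (b + 2) ^+ 2).
  by field; rewrite ?a1_neq0 ?b2_neq0 ?b3_neq0 //= ?mulf_neq0 ?expf_neq0.
apply: divr_ge0; last by rewrite !mulr_ge0 ?sqr_ge0 //; lra.
apply: mulr_ge0; first lra.
have : 0 <= b * (a + 1) ^+ 2 by rewrite mulr_ge0 ?sqr_ge0.
have : 0 <= (a + 1) * (4 * a - 2) by apply: mulr_ge0; lra.
have : 0 <= b ^+ 2 * (a + 1) by rewrite mulr_ge0 ?sqr_ge0 //; lra.
have : 0 <= b * (a + 1) by apply: mulr_ge0; lra.
lra.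
Qed.

Lemma rate_step (a b mu S e e' : R) : 1 <= a -> 0 <= b -> 0 <= S ->
  0 <= mu <= (a / (a + 1)) ^+ 2 -> mu * e <= 2 * a * S / (b + 2) ->
  e' <= (1 - 2 / (b + 2)) * (mu * e) + 2 / (b + 2) * S ->
  mu * e' <= 2 * a * S / (b + 3).
Proof.
move=> a_ge1 b_ge0 S_ge0 /andP [mu_ge0 mu_le] muE_le e'_le.
have b2_neq0 : b + 2 != 0 by apply/eqP; lra.
have b3_neq0 : b + 3 != 0 by apply/eqP; lra.
have one_sub_eta_ge0 : 0 <= 1 - 2 / (b + 2).
  have -> : 1 - 2 / (b + 2) = b / (b + 2) by field.
  by apply: divr_ge0; lra.
set T := 2 * a * b / (b + 2) ^+ 2 + 2 / (b + 2).
have T_ge0 : 0 <= T by rewrite addr_ge0 ?divr_ge0 ?mulr_ge0 ?sqr_ge0 //; lra.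
apply: (@le_trans _ _ (mu * (S * T))).
  rewrite ler_wpM2l // (le_trans e'_le) //.
  have -> : S * T = (1 - 2 / (b + 2)) * (2 * a * S / (b + 2)) + 2 / (b + 2) * S.
    by rewrite /T; field.
  by rewrite lerD2r ler_wpM2l.
have -> : 2 * a * S / (b + 3) = S * (2 * a / (b + 3)) by field.
rewrite mulrCA ler_wpM2l // (le_trans _ (rate_ratio_le a_ge1 b_ge0)) //.
by rewrite ler_wpM2r.
Qed.

(* The bound mu <= (a/(a+1))^2 is exactly what makes the rate 2a/(k+2)
   propagate through the recursion (see rate_ratio_le). *)
Lemma rate_recursion (a mu S : R) (e : nat -> R) :
  1 <= a -> 0 <= S -> 0 <= mu <= (a / (a + 1)) ^+ 2 -> e 1%N <= S ->
  (forall k, (1 <= k)%N ->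
    e k.+1 <= (1 - 2 / (k%:R + 2)) * (mu * e k) + 2 / (k%:R + 2) * S) ->
  forall k, (1 <= k)%N -> mu * e k <= 2 * a * S / (k%:R + 2).
Proof.
move=> a_ge1 S_ge0 mu_bounds e1_le e_rec; elim=> [//|[|k] IH _].
  (* the first iterate is the step from a virtual e_0 = 0 with eta_0 = 1 *)
  have -> : 1%:R + 2 = 0 + 3 :> R by ring.
  apply: (@rate_step a 0 mu S 0) => //; first by rewrite mulr0 divr_ge0 ?mulr_ge0 //; lra.
  by rewrite add0r divff ?subrr ?mul0r ?add0r ?mul1r // pnatr_eq0.
have -> : k.+2%:R + 2 = k.+1%:R + 3 :> R by rewrite -natr1; ring.
by apply: rate_step (IH _) (e_rec _ _) => //; rewrite ler0n.
Qed.

End RateRecursion.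

Lemma second_eig_modulus_ge0 {R : realType} {n : nat} {C : 'M[R]_n} {m : R} :
  second_eig_modulus C m -> 0 <= m.
Proof.
move=> [rs [_ ->]]; set s := sort _ _.
have [s_gt1 | s_le1] := ltnP 1 (size s); last by rewrite nth_default.
have : nth 0 s 1 \in map (@Normc.normc R) rs.
  by rewrite -(mem_sort (fun a b : R => b <= a)) mem_nth.
by case/mapP=> -[a b] _ ->; exact: sqrtr_ge0.
Qed.

Section DMFWIterates.
Variables (R : realType) (n p : nat) (C : 'M[R]_n) (lam : R) (k0 : nat).
Variables (X : set 'rV[R]_p) (D : R) (eta : nat -> R).
Variables (x xhat theta : nat -> 'I_n -> 'rV[R]_p).

Hypothesis n_gt0 : (0 < n)%N.
Hypothesis C_ds : doubly_stochastic C.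
Hypothesis lam_ge0 : 0 <= lam.
Hypothesis mixv_contract : forall z : 'I_n -> 'rV[R]_p,
  consensus_err (mixv C z) (avgv z) <= lam * consensus_err z (avgv z).
Hypothesis k0_gt0 : (0 < k0)%N.
Hypothesis lam_le_k0 : lam <= (k0%:R / (k0.+1)%:R) ^+ 2.
Hypothesis X_diam : forall a b, X a -> X b -> enorm (a - b) <= D.
Hypothesis x1_in : forall i, X (x 1%N i).
Hypothesis xhatE : forall k i, (1 <= k)%N -> xhat k i = mixv C (x k) i.
Hypothesis theta_in : forall k i, (1 <= k)%N -> X (theta k i).
Hypothesis etaE : forall k, (1 <= k)%N -> eta k = 2 / (k%:R + 2).
Hypothesis x_next : forall k i, (1 <= k)%N ->
  x k.+1 i = xhat k i + eta k *: (theta k i - xhat k i).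

Let S := Num.sqrt n%:R * D.

Lemma diam_ge0 : 0 <= D.
Proof.
pose i : 'I_n := Ordinal n_gt0.
by have := X_diam _ _ (x1_in i) (x1_in i); rewrite subrr enorm0.
Qed.

Lemma eta_bounds k : (1 <= k)%N -> 0 <= eta k <= 1.
Proof.
move=> k_ge1; rewrite etaE //.
have k_ge1R : 1 <= k%:R :> R by rewrite ler1n.
by rewrite divr_ge0 ?ler_pdivrMr /=; lra.
Qed.

Lemma x_nextE k : (1 <= k)%N ->
  x k.+1 = (fun i => (1 - eta k) *: xhat k i + eta k *: theta k i).
Proof.
move=> k_ge1; apply/funext => i.
by rewrite x_next // scalerBr scalerBl scale1r addrCA addrC.
Qed.

Lemma xhat_mixv k : (1 <= k)%N -> xhat k = mixv C (x k).
Proof. by move=> k_ge1; apply/funext => i; exact: xhatE. Qed.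

Lemma avgv_xhat k : (1 <= k)%N -> avgv (xhat k) = avgv (x k).
Proof. by move=> k_ge1; rewrite xhat_mixv // avgv_mixv. Qed.

Lemma avgv_x_next k : (1 <= k)%N ->
  avgv (x k.+1) = (1 - eta k) *: avgv (x k) + eta k *: avgv (theta k).
Proof. by move=> k_ge1; rewrite x_nextE // avgv_lincomb avgv_xhat. Qed.

(* Rather than x_k in X, track that x_k is within D of all of X: this is
   preserved by the convex combinations forming x_(k+1) and xhat_k. *)
Lemma dist_x_le k i a : (1 <= k)%N -> X a -> enorm (x k i - a) <= D.
Proof.
elim: k i => [//|[|k] IH] i _ Xa; first exact: X_diam (x1_in i) Xa.
rewrite x_nextE //; apply: enorm_conv2_sub_le.
- exact: eta_bounds.
- rewrite xhatE // enorm_distC; apply: enorm_sub_mixv_le C_ds _ => j.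
  by rewrite enorm_distC; exact: IH.
- by apply: X_diam Xa; exact: theta_in.
Qed.

Lemma dist_xhat_le k i a : (1 <= k)%N -> X a -> enorm (xhat k i - a) <= D.
Proof.
move=> k_ge1 Xa; rewrite xhatE // enorm_distC; apply: enorm_sub_mixv_le C_ds _ => j.
by rewrite enorm_distC; exact: dist_x_le.
Qed.

Lemma consensus_err_x1 : consensus_err (x 1%N) (avgv (x 1%N)) <= S.
Proof.
apply: consensus_err_le diam_ge0 _ => i.
by apply: enorm_sub_avgv_le n_gt0 _ => j; exact: X_diam.
Qed.

Lemma consensus_err_x_next k : (1 <= k)%N ->
  consensus_err (x k.+1) (avgv (x k.+1))
    <= (1 - eta k) * (lam * consensus_err (x k) (avgv (x k))) + eta k * S.
Proof.
move=> k_ge1; have eta01 := eta_bounds _ k_ge1.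
have /andP [eta_ge0 eta_le1] := eta01.
rewrite avgv_x_next // x_nextE //.
apply: le_trans (consensus_err_conv _ _ _ _ _ eta01) _.
apply: lerD; apply: ler_wpM2l; rewrite ?subr_ge0 //.
  by rewrite xhat_mixv //; exact: mixv_contract.
apply: consensus_err_le diam_ge0 _ => i.
by apply: enorm_sub_avgv_le n_gt0 _ => j; apply: X_diam; exact: theta_in.
Qed.

Lemma lam_consensus_err_le k : (1 <= k)%N ->
  lam * consensus_err (x k) (avgv (x k)) <= 2 * k0%:R * S / (k%:R + 2).
Proof.
apply: (@rate_recursion _ k0%:R _ _ (fun j => consensus_err (x j) (avgv (x j)))).
- by rewrite ler1n.
- by rewrite mulr_ge0 ?sqrtr_ge0 ?diam_ge0.
- by rewrite lam_ge0 natr1.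
- exact: consensus_err_x1.
- by move=> j j_ge1; rewrite -etaE //; exact: consensus_err_x_next.
Qed.

Lemma xhat_dev_le k i : (1 <= k)%N ->
  enorm (xhat k i - avgv (x k)) <= 2 * k0%:R * S / (k%:R + 2).
Proof.
move=> k_ge1; rewrite xhat_mixv //.
apply: le_trans (enorm_le_consensus_err _ _ i) _.
exact: le_trans (mixv_contract _) (lam_consensus_err_le _ k_ge1).
Qed.

Lemma avgv_x_step_le k : (1 <= k)%N ->
  enorm (avgv (x k.+1) - avgv (x k)) <= 2 / (k%:R + 2) * D.
Proof.
move=> k_ge1; have /andP [eta_ge0 _] := eta_bounds _ k_ge1.
have -> : avgv (x k.+1) - avgv (x k) = eta k *: (avgv (theta k) - avgv (x k)).
  rewrite avgv_x_next // scalerBl scale1r scalerBr addrAC.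
  by rewrite [avgv (x k) - _ - _]addrAC subrr add0r addrC.
rewrite enormZ ger0_norm // -etaE // ler_wpM2l // -avgv_xhat //.
apply: enorm_sub_avgv_le n_gt0 _ => j; rewrite enorm_distC.
apply: enorm_sub_avgv_le n_gt0 _ => l.
exact: dist_xhat_le _ _ _ k_ge1 (theta_in _ l k_ge1).
Qed.

Lemma xhat_step_le k i : (1 <= k)%N ->
  enorm (xhat k.+1 i - xhat k i) <= 2 * (D + 2 * (k0%:R * S)) / (k%:R + 2).
Proof.
move=> k_ge1.
have -> : xhat k.+1 i - xhat k i = (xhat k.+1 i - avgv (x k.+1))
    + (avgv (x k.+1) - avgv (x k)) + (avgv (x k) - xhat k i).
  by rewrite !addrA !subrK.
apply: le_trans (enormD _ _) _; apply: le_trans (lerD (enormD _ _) (lexx _)) _.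
have k2_gt0 : 0 < k%:R + 2 :> R by rewrite ltr_wpDl.
have dev_next : enorm (xhat k.+1 i - avgv (x k.+1)) <= 2 * k0%:R * S / (k%:R + 2).
  apply: le_trans (xhat_dev_le _ i (leqW k_ge1)) _.
  rewrite ler_wpM2l ?mulr_ge0 ?sqrtr_ge0 ?diam_ge0 // lef_pV2 ?posrE ?ltr_wpDl //.
  by rewrite lerD2r ler_nat.
have dev := xhat_dev_le _ i k_ge1; rewrite enorm_distC in dev.
apply: le_trans (lerD (lerD dev_next (avgv_x_step_le _ k_ge1)) dev) _.
by rewrite le_eqVlt; apply/predU1P; left; field; rewrite gt_eqF.
Qed.

End DMFWIterates.

Theorem lemma7
  (R : realType) (n p : nat)
  (* communication graph and weight matrix *)
  (E : rel 'I_n) (C : 'M[R]_n)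
  (HG : connected_graph E) (HCsupp : supported_on C E)
  (HCds : doubly_stochastic C)
  (* lam = |lambda|, modulus of the second largest eigenvalue of C *)
  (lam : R) (Hlam : second_eig_modulus C lam) (Hlam1 : lam < 1)
  (Hcontr : forall z : 'I_n -> 'rV[R]_p,
      consensus_err (mixv C z) (avgv z) <= lam * consensus_err z (avgv z))
  (* k0 = smallest positive integer with |lambda| <= (k0/(k0+1))^2 *)
  (k0 : nat) (Hk0pos : (0 < k0)%N)
  (Hk0 : lam <= (k0%:R / (k0.+1)%:R) ^+ 2)
  (Hk0min : forall k : nat, (0 < k)%N -> (k < k0)%N ->
      ~ (lam <= (k%:R / (k.+1)%:R) ^+ 2))
  (* constraint set *)
  (X : set 'rV[R]_p) (D : R)
  (HXconv : convex_set X) (HXcomp : compact X)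
  (HXdiam : forall a b, X a -> X b -> enorm (a - b) <= D)
  (* stochastic gradient oracles grad f_i(x, xi), with L-Lipschitz gradient *)
  (Xi : Type) (gf : 'I_n -> 'rV[R]_p -> Xi -> 'rV[R]_p) (L : R)
  (HgfL : forall i xi a b, enorm (gf i a xi - gf i b xi) <= L * enorm (a - b))
  (* realization of the samples xi_k^i *)
  (xi : nat -> 'I_n -> Xi)
  (* step sizes *)
  (gamma eta : nat -> R)
  (Hgamma : forall k, (1 <= k)%N -> 0 < gamma k <= 1)
  (Heta : forall k, (1 <= k)%N -> eta k = 2 / (k%:R + 2))
  (* the DMFW iterates *)
  (x xhat y s pp theta : nat -> 'I_n -> 'rV[R]_p)
  (Hx1 : forall i, X (x 1%N i))
  (Hxhat : forall k i, (1 <= k)%N -> xhat k i = mixv C (x k) i)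
  (Hy1 : forall i, y 1%N i = gf i (xhat 1%N i) (xi 1%N i))
  (Hs1 : forall i, s 1%N i = y 1%N i)
  (Hy : forall k i, (2 <= k)%N ->
      y k i = (1 - gamma k) *: y k.-1 i + gf i (xhat k i) (xi k i)
              - (1 - gamma k) *: gf i (xhat k.-1 i) (xi k i))
  (Hs : forall k i, (2 <= k)%N ->
      s k i = mixv C (s k.-1) i + y k i - y k.-1 i)
  (Hp : forall k i, (1 <= k)%N -> pp k i = mixv C (s k) i)
  (Htheta : forall k i, (1 <= k)%N ->
      X (theta k i) /\ (forall phi, X phi -> dotv (pp k i) (theta k i) <= dotv (pp k i) phi))
  (Hxnext : forall k i, (1 <= k)%N ->
      x k.+1 i = xhat k i + eta k *: (theta k i - xhat k i)) :
  forall (i : 'I_n) (k : nat), (1 <= k)%N ->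
    enorm (xhat k.+1 i - xhat k i)
      <= 2 * (D + 2 * (k0%:R * Num.sqrt n%:R * D)) / (k%:R + 2).
Proof.
move=> i k k_ge1; rewrite -[k0%:R * _ * D]mulrA.
have n_gt0 : (0 < n)%N := leq_ltn_trans (leq0n i) (ltn_ord i).
have theta_in k' j : (1 <= k')%N -> X (theta k' j) by move=> /(Htheta k' j) [].
exact: (@xhat_step_le _ _ _ _ _ _ _ _ _ _ _ _ n_gt0 HCds
  (second_eig_modulus_ge0 Hlam) Hcontr Hk0pos Hk0 HXdiam Hx1 Hxhat theta_in
  Heta Hxnext).
Qed.
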